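(* Let $\rho_k:\{1,\dots,\ell\}\times\mathbb{B}^n\to\overline{\mathbb{Q}}$ and let $(\sigma,\pi)$ be a strategy such that $\Psi_\pi(\rho_k)\ge\rho_k$. Let $\rho_{k+1}$ be the least fixed point of $\Psi_\pi$ greater than or equal to $\rho_k$ (original strategy evaluation), and let $\hat\rho$ be the result of the modified strategy evaluation, i.e. the least fixed point of $\hat\Psi_\pi$ greater than or equal to $\hat r_1$, where $\hat r_1(i,[\vec b]_i)=\Psi_\pi(\rho_k)(i,\vec b)$. Then for all $1\le i\le\ell$ and all $\vec b\in\mathbb{B}^n$, $\rho_{k+1}(i,\vec b)=\hat\rho(i,[\vec b]_i)$.
   Context: Setting: a program with rational variables $\vec x\in\mathbb{Q}^m$, Boolean variables $\vec b\in\mathbb{B}^n$ ($\mathbb{B}=\{0,1\}$), and transition relation $\exists\vec y\in\mathbb{Q}^E\,\exists\vec p\in\mathbb{B}^d.\ T$, where $T$ is a quantifier-free formula whose atoms are propositional literals over $\vec b,\vec b',\vec p$ and linear (in)equalities over $\vec x,\vec x',\vec y$, such that for each $\pi\in\mathbb{B}^d$, $T[\pi/\vec p]$ is the conjunction of a propositional formula in $\vec b,\vec b'$ and a conjunction $T_\pi$ of linear constraints in $\vec x,\vec x',\vec y$. Let $A\in\mathbb{Q}^{\ell\times m}$ be a template matrix with rows $A_1,\dots,A_\ell$, and $\overline{\mathbb{Q}}=\mathbb{Q}\cup\{\pm\infty\}$; functions $\{1,\dots,\ell\}\times\mathbb{B}^n\to\overline{\mathbb{Q}}$ are ordered pointwise,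 and $\rho(\vec b)$ denotes the vector $(\rho(1,\vec b),\dots,\rho(\ell,\vec b))$. A strategy assigns to each $(i',\vec b')$ either $\bot$ or a pair $(\sigma(i',\vec b'),\pi(i',\vec b'))\in\mathbb{B}^n\times\mathbb{B}^d$. The operator is $\Psi_\pi(\rho)(i',\vec b')=\sup\{A_{i'}\vec x':\exists\vec x,\vec y.\ T_{\pi(i',\vec b')}\wedge A\vec x\le\rho(\sigma(i',\vec b'))\}$, with value $-\infty$ when the strategy is $\bot$ at $(i',\vec b')$ or the set is empty. For each $i$, define the equivalence $\vec b_1\sim_i\vec b_2$ iff $\pi(i,\vec b_1)=\pi(i,\vec b_2)$ and $\sigma(i,\vec b_1)=\sigma(i,\vec b_2)$, and let $[\vec b]_i$ denote the class of $\vec b$. The modified evaluation works on functions $r$ assigning a value in $\overline{\mathbb{Q}}$ to each pair $(i,C)$ with $C$ a $\sim_i$-class, via $\hat\Psi_\pi(r)(i',[\vec b']_{i'})=\sup\{A_{i'}\vec x':\exists\vec x,\vec y.\ T_{\pi(i',\vec b')}\wedge\bigwedge_{j=1}^\ell A_j\vec x\le r(j,[\sigma(i',\vec b')]_j)\}$ (again $-\infty$ if the strategy is $\bot$), which is well defined since $\pi(i',\cdot),\sigma(i',\cdot)$ are constant on $\sim_{i'}$-classes. *)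

From HB Require Import structures.
From mathcomp Require Import all_boot all_order all_algebra.
From mathcomp Require Import constructive_ereal.
From Stdlib Require Import ClassicalEpsilon.
Set Implicit Arguments. Unset Strict Implicit. Unset Printing Implicit Defensive.
Import Order.TTheory GRing.Theory Num.Theory.
Local Open Scope ring_scope.

Definition Qbar := \bar rat.

Definition Bvec (k : nat) := {ffun 'I_k -> bool}.

(* A conjunction of (non-strict) linear constraints over x, x' in Q^m and
   y in Q^E :   Cx x + Cx' x' + Cy y <= c   (componentwise).
   Equalities are expressed as pairs of inequalities. *)
Record linsys (m E : nat) := LinSys {
  nc : nat;
  Cx : 'M[rat]_(nc, m);
  Cx' : 'M[rat]_(nc, m);
  Cy : 'M[rat]_(nc, E);
  cc : 'cV[rat]_nc }.

Definition lsat (m E : nat) (S : linsys m E)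
    (x x' : 'cV[rat]_m) (y : 'cV[rat]_E) : Prop :=
  forall k : 'I_(nc S), (Cx S *m x + Cx' S *m x' + Cy S *m y) k 0 <= cc S k 0.

Definition is_lub (S : Qbar -> Prop) (v : Qbar) : Prop :=
  (forall u, S u -> (u <= v)%E) /\
  (forall w, (forall u, S u -> (u <= w)%E) -> (v <= w)%E).

(* supremum in \bar Q (it exists for the polyhedral sets considered here;
   the sup of the empty set is -oo) *)
Definition qsup (S : Qbar -> Prop) : Qbar :=
  epsilon (inhabits +oo%E) (is_lub S).

(* a strategy: for each (i', b'), either bot (None) or (sigma, pi) *)
Definition strategy (l n d : nat) := 'I_l -> Bvec n -> option (Bvec n * Bvec d).

Section Ops.
Variables (m n d E l : nat) (A : 'M[rat]_(l, m)) (T : Bvec d -> linsys m E)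
  (st : strategy l n d).

Definition Arow (i : 'I_l) (x : 'cV[rat]_m) : rat := (A *m x) i 0.

Definition Psi (rho : 'I_l -> Bvec n -> Qbar) (i' : 'I_l) (b' : Bvec n) : Qbar :=
  match st i' b' with
  | None => -oo%E
  | Some (s, p) =>
      qsup (fun v => exists x x' y, lsat (T p) x x' y /\
              (forall j, ((Arow j x)%:E <= rho j s)%E) /\ v = (Arow i' x')%:E)
  end.

Definition eqcls (i : 'I_l) (b : Bvec n) : {set Bvec n} :=
  [set b' | st i b' == st i b].

Definition classes (i : 'I_l) : {set {set Bvec n}} := [set eqcls i b | b in [set: Bvec n]].

Definition cls (i : 'I_l) := {C : {set Bvec n} | C \in classes i}.

Definition cls_of (i : 'I_l) (b : Bvec n) : cls i :=
  exist _ (eqcls i b) (imset_f (eqcls i) (in_setT b)).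

Definition crep (i : 'I_l) (C : cls i) : Bvec n :=
  odflt [ffun=> false] [pick b in val C].

Definition Psihat (r : forall i : 'I_l, cls i -> Qbar) (i' : 'I_l) (C : cls i') : Qbar :=
  match st i' (crep C) with
  | None => -oo%E
  | Some (s, p) =>
      qsup (fun v => exists x x' y, lsat (T p) x x' y /\
              (forall j, ((Arow j x)%:E <= r j (cls_of j s))%E) /\ v = (Arow i' x')%:E)
  end.

End Ops.
Arguments Psihat [m n d E l] A T st r i' C.

Definition le_fun (l n : nat) (r1 r2 : 'I_l -> Bvec n -> Qbar) : Prop :=
  forall i b, (r1 i b <= r2 i b)%E.

Definition le_dfun (l : nat) (X : 'I_l -> Type) (r1 r2 : forall i, X i -> Qbar) : Prop :=
  forall i c, (r1 i c <= r2 i c)%E.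

Definition least_fp_above (U : Type) (le : U -> U -> Prop) (F : U -> U) (r0 r : U) : Prop :=
  F r = r /\ le r0 r /\ (forall r', F r' = r' -> le r0 r' -> le r r').

(* A fixed point of the modified operator, lifted along [b |-> [b]_i], is a fixed point of
   [Psi] above [rho_k], so [rho_{k+1}] lies below it. Conversely a fixed point of [Psi] depends
   at [(i, b)] only on the strategy at [(i, b)]; it is therefore constant on classes and descends
   to a fixed point of the modified operator, which lies above [r_1] by monotonicity of [Psi];
   so [hat rho] lies below it.
   Monotonicity needs the suprema defining [Psi] to exist in [\bar Q]: by Fourier-Motzkin
   elimination the values of a linear form on a rational polyhedron form an interval cut out
   by rational constraints, whose supremum is rational or infinite. *)

From mathcomp Require Import all_boot all_order all_algebra.
From mathcomp Require Import ring lra constructive_ereal.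
From Stdlib Require Import Classical ClassicalEpsilon FunctionalExtensionality.
From Stdlib Require List.
Set Implicit Arguments. Unset Strict Implicit. Unset Printing Implicit Defensive.
Import Order.TTheory GRing.Theory Num.Theory.
Local Open Scope ring_scope.

Lemma In_enum (T : finType) (x : T) : List.In x (enum T).
Proof.
elim: (enum T) (mem_enum T x) => [//|a s IH].
by rewrite in_cons => /orP [/eqP ->|/IH]; [left|right].
Qed.

Lemma ex_max (R : realDomainType) (A : Type) (g : A -> R) (s : seq A) (x : A) :
  List.In x s -> exists2 c, List.In c s & forall c', List.In c' s -> g c' <= g c.
Proof.
elim: s x => [//|a s IH] x _; case: s IH => [|b s] IH.
  by exists a => [|c' [<-|]]; [left|..].
have [c c_in c_max] := IH b (or_introl erefl).
have [ac|ca] := lerP (g a) (g c).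
  by exists c => [|c' [<-|/c_max]]; [right|..].
exists a => [|c' [<-|/c_max c'c]]; [left| |] => //.
exact: le_trans c'c (ltW ca).
Qed.

Lemma ex_min (R : realDomainType) (A : Type) (g : A -> R) (s : seq A) (x : A) :
  List.In x s -> exists2 c, List.In c s & forall c', List.In c' s -> g c <= g c'.
Proof.
move=> /(ex_max (fun c => - g c)) [c c_in c_max].
by exists c => // c' /c_max; rewrite lerN2.
Qed.

Lemma ex_between (R : realDomainType) (lo hi : seq R) :
  (forall a b, List.In a lo -> List.In b hi -> a <= b) ->
  exists u, (forall a, List.In a lo -> a <= u) /\ (forall b, List.In b hi -> u <= b).
Proof.
move=> lo_hi; case: lo lo_hi => [|a0 lo] lo_hi.
  case: hi lo_hi => [|b0 hi] lo_hi; first by exists 0.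
  have [b b_in b_min] := ex_min id (or_introl erefl : List.In b0 (b0 :: hi)).
  by exists b.
have [a a_in a_max] := ex_max id (or_introl erefl : List.In a0 (a0 :: lo)).
by exists a; split => // b; apply: lo_hi.
Qed.

Section FourierMotzkin.
Variables (R : realFieldType) (I : finType).

Definition constr := ((I -> R) * R)%type.

Definition sat (c : constr) (z : I -> R) : bool := \sum_i c.1 i * z i <= c.2.

Definition sat_all (L : seq constr) (z : I -> R) : Prop :=
  forall c, List.In c L -> sat c z.

Lemma eq_sat_all L z1 z2 : z1 =1 z2 -> sat_all L z1 -> sat_all L z2.
Proof.
move=> e12 L1 c /L1; rewrite /sat (eq_bigr (fun i => c.1 i * z2 i)) // => i _.
by rewrite e12.
Qed.

Definition upd (z : I -> R) (v : I) (u : R) : I -> R :=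
  fun i => if i == v then u else z i.

Definition rest v (c : constr) z := \sum_(i | i != v) c.1 i * z i.

(* The value of [v] at which [c] becomes tight, the other variables being fixed. *)
Definition bound v c z := (c.2 - rest v c z) / c.1 v.

Lemma satE v c z : sat c z = (c.1 v * z v + rest v c z <= c.2).
Proof. by rewrite /sat (bigD1 v). Qed.

Lemma sat_updE v c z u : sat c (upd z v u) = (c.1 v * u + rest v c z <= c.2).
Proof.
rewrite (satE v) /upd eqxx /rest; congr (_ + _ <= _).
by apply: eq_bigr => i /negbTE ->.
Qed.

Lemma sat_upd0 v c z u : c.1 v = 0 -> sat c (upd z v u) = sat c z.
Proof. by move=> c0; rewrite sat_updE (satE v) c0 !mul0r. Qed.

Lemma sat_upd_gt0 v c z u : 0 < c.1 v -> sat c (upd z v u) = (u <= bound v c z).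
Proof. by move=> c0; rewrite sat_updE ler_pdivlMr // mulrC lerBrDr. Qed.

Lemma sat_upd_lt0 v c z u : c.1 v < 0 -> sat c (upd z v u) = (bound v c z <= u).
Proof. by move=> c0; rewrite sat_updE ler_ndivrMr // mulrC lerBrDr. Qed.

(* The positive combination of [p] and [q] in which the variable [v] cancels. *)
Definition comb v (p q : constr) : constr :=
  (fun i => - q.1 v * p.1 i + p.1 v * q.1 i, - q.1 v * p.2 + p.1 v * q.2).

Lemma comb_coef v p q : (comb v p q).1 v = 0.
Proof. by rewrite /=; ring. Qed.

Lemma sat_comb v p q z : 0 < p.1 v -> q.1 v < 0 ->
  sat (comb v p q) z = (bound v q z <= bound v p z).
Proof.
move=> p0 q0; rewrite (satE v) comb_coef mul0r add0r.
have -> : rest v (comb v p q) z = - q.1 v * rest v p z + p.1 v * rest v q z.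
  by rewrite /rest !mulr_sumr -big_split; apply: eq_bigr => i _ /=; ring.
rewrite /bound ler_pdivlMr // mulrAC ler_ndivrMr //.
by rewrite -subr_ge0 -[X in _ = X]subr_ge0; congr (0 <= _) => /=; ring.
Qed.

Definition fm_elim v (L : seq constr) : seq constr :=
  List.filter (fun c => c.1 v == 0) L ++
  List.flat_map (fun p => List.map (comb v p) (List.filter (fun q => q.1 v < 0) L))
    (List.filter (fun p => 0 < p.1 v) L).

Lemma in_fm_elim v L c : List.In c (fm_elim v L) <->
  (List.In c L /\ c.1 v = 0) \/
  exists p q, [/\ List.In p L, 0 < p.1 v, List.In q L, q.1 v < 0 & c = comb v p q].
Proof.
rewrite List.in_app_iff List.filter_In List.in_flat_map; split.
  case=> [[c_in /eqP c0]|[p [/List.filter_In [p_in p0]]]]; first by left.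
  by move/List.in_map_iff => [q [<- /List.filter_In [q_in q0]]]; right; exists p, q.
case=> [[c_in c0]|[p [q [p_in p0 q_in q0 ->]]]]; first by left; rewrite c0 eqxx.
right; exists p; split; first exact/List.filter_In.
by apply/List.in_map_iff; exists q; split => //; apply/List.filter_In.
Qed.

Lemma fm_elim_coef v L c : List.In c (fm_elim v L) -> c.1 v = 0.
Proof. by case/in_fm_elim => [[]|[p [q [_ _ _ _ ->]]]] //; exact: comb_coef. Qed.

Lemma fm_elim_coef0 v w L : (forall c, List.In c L -> c.1 w = 0) ->
  forall c, List.In c (fm_elim v L) -> c.1 w = 0.
Proof.
move=> Lw c /in_fm_elim [[/Lw]//|[p [q [p_in _ q_in _ ->]]]].
by rewrite /= (Lw _ p_in) (Lw _ q_in) !mulr0 addr0.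
Qed.

Lemma sat_fm_elim v L z u : sat_all L (upd z v u) -> sat_all (fm_elim v L) z.
Proof.
move=> Lz c /in_fm_elim [[c_in c0]|[p [q [p_in p0 q_in q0 ->]]]].
  by rewrite -(sat_upd0 z u c0); apply: Lz.
rewrite sat_comb //; apply: (@le_trans _ _ u).
  by rewrite -(sat_upd_lt0 _ _ q0); apply: Lz.
by rewrite -(sat_upd_gt0 _ _ p0); apply: Lz.
Qed.

(* Any value between the largest lower bound and the least upper bound on [v] works. *)
Lemma fm_elim_sat v L z : sat_all (fm_elim v L) z -> exists u, sat_all L (upd z v u).
Proof.
move=> Lz.
pose bnds P := List.map (fun c => bound v c z) (List.filter P L).
have [|u [u_lo u_hi]] := @ex_between _ (bnds (fun q => q.1 v < 0)) (bnds (fun p => 0 < p.1 v)).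
  move=> a b /List.in_map_iff [q [<- /List.filter_In [q_in q0]]].
  move=> /List.in_map_iff [p [<- /List.filter_In [p_in p0]]].
  by rewrite -sat_comb //; apply: Lz; apply/in_fm_elim; right; exists p, q; split.
exists u => c c_in; case: (ltgtP (c.1 v) 0) => c0.
- rewrite sat_upd_lt0 //; apply: u_lo; apply/List.in_map_iff.
  by exists c; split => //; apply/List.filter_In.
- rewrite sat_upd_gt0 //; apply: u_hi; apply/List.in_map_iff.
  by exists c; split => //; apply/List.filter_In.
- by rewrite sat_upd0 //; apply: Lz; apply/in_fm_elim; left.
Qed.

Definition patch (V : seq I) (w z : I -> R) : I -> R :=
  fun i => if i \in V then w i else z i.

Lemma fm_elim_seq (V : seq I) (L : seq constr) : exists L' : seq constr,
  (forall c, List.In c L' -> forall v, v \in V -> c.1 v = 0) /\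
  forall z, sat_all L' z <-> exists w, sat_all L (patch V w z).
Proof.
elim: V L => [|v V IH] L.
  exists L; split => // z; split => [Lz|[w]]; first by exists z; apply: eq_sat_all Lz.
  exact: eq_sat_all.
have [L1 [L1V L1E]] := IH L.
exists (fm_elim v L1); split.
  move=> c c_in w; rewrite in_cons => /orP [/eqP ->|wV]; first exact: fm_elim_coef c_in.
  by apply: fm_elim_coef0 c_in => c' /L1V; apply.
move=> z; split.
  move=> /fm_elim_sat [u /L1E [w Lw]]; exists (fun i => if i \in V then w i else u).
  by apply: eq_sat_all Lw => i; rewrite /patch /upd in_cons; case: (i \in V); case: eqP.
move=> [w Lw]; apply: (@sat_fm_elim _ _ _ (w v)); apply/L1E; exists w.
by apply: eq_sat_all Lw => i; rewrite /patch /upd in_cons; case: (i \in V); case: eqP => [->|].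
Qed.

End FourierMotzkin.

Section LinearImage.
Variables (R : realFieldType) (I : finType).
Implicit Types (L : seq (constr R I)) (f z : I -> R).

Lemma big_sum_ord1 (F : I + 'I_1 -> R) : \sum_o F o = \sum_i F (inl i) + F (inr ord0).
Proof. by rewrite big_sumType big_ord1. Qed.

Definition extend z (t : R) : I + 'I_1 -> R := fun o => if o is inl i then z i else t.

Definition lift_constr (c : constr R I) : constr R (I + 'I_1)%type :=
  (fun o => if o is inl i then c.1 i else 0, c.2).

Lemma sat_lift_constr c z t : sat (lift_constr c) (extend z t) = sat c z.
Proof. by rewrite /sat big_sum_ord1 /= mul0r addr0. Qed.

Definition graph_constrs f L : seq (constr R (I + 'I_1)%type) :=
  (fun o => if o is inl i then f i else -1, 0) ::
  (fun o => if o is inl i then - f i else 1, 0) ::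
  List.map lift_constr L.

Lemma sat_graph_constrs f L z t :
  sat_all (graph_constrs f L) (extend z t) <-> sat_all L z /\ \sum_i f i * z i = t.
Proof.
have sumN : \sum_i - f i * z i = - \sum_i f i * z i.
  by rewrite -sumrN; apply: eq_bigr => i _; rewrite mulNr.
split=> [Lz|[Lz <-] c [<-|[<-|/List.in_map_iff [c' [<- /Lz]]]]]; last first.
- by rewrite sat_lift_constr.
- by rewrite /sat big_sum_ord1 /= sumN; lra.
- by rewrite /sat big_sum_ord1 /=; lra.
split=> [c c_in|].
  by rewrite -(sat_lift_constr _ _ t); apply: Lz; right; right; apply: List.in_map.
have := Lz _ (or_introl erefl); have := Lz _ (or_intror (or_introl erefl)).
by rewrite /sat !big_sum_ord1 /= sumN; lra.
Qed.

(* Eliminate every variable but the value of the form. *)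
Lemma linear_image_constr f L : exists L1 : seq (R * R), forall t,
  (forall c, List.In c L1 -> c.1 * t <= c.2) <->
  exists z, sat_all L z /\ \sum_i f i * z i = t.
Proof.
pose V := [seq inl i | i <- enum I] : seq (I + 'I_1)%type.
have inlV i : inl i \in V by rewrite map_f // mem_enum.
have [L' [L'V L'E]] := fm_elim_seq V (graph_constrs f L).
exists (List.map (fun c => (c.1 (inr ord0), c.2)) L') => t.
have satL' c (x : I + 'I_1 -> R) :
    List.In c L' -> sat c x = (c.1 (inr ord0) * x (inr ord0) <= c.2).
  move=> c_in; rewrite /sat big_sum_ord1 big1 ?add0r // => i _.
  by rewrite (L'V c c_in) ?mul0r.
have patch_extend w z : patch V w (extend z t) =1 extend (fun i => w (inl i)) t.
  by case=> [i|j]; rewrite /patch /= ?inlV // (negbTE (_ : inr j \notin V)) //;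
    apply/mapP => -[].
transitivity (sat_all L' (extend (fun=> 0) t)).
  split=> [L1t c c_in|L't c /List.in_map_iff [c' [<- c'_in]]].
    by rewrite satL' //; exact: (L1t (_, _) (List.in_map _ _ _ c_in)).
  by have := L't _ c'_in; rewrite satL'.
rewrite L'E; split=> [[w]|[z /sat_graph_constrs Lz]].
  by move=> /(eq_sat_all (patch_extend w _)) /sat_graph_constrs; exists (fun i => w (inl i)).
by exists (extend z t); apply: eq_sat_all Lz => o; rewrite patch_extend; case: o.
Qed.

End LinearImage.

Section Lub.
Local Open Scope ereal_scope.
Implicit Types (S : Qbar -> Prop) (v : Qbar).

Lemma eq_is_lub S1 S2 v : (forall u, S1 u <-> S2 u) -> is_lub S1 v -> is_lub S2 v.
Proof.
move=> e [ub least]; split=> [u /e /ub //|w w_ub].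
by apply: least => u /e /w_ub.
Qed.

Lemma is_lub_empty S : (forall v, ~ S v) -> is_lub S -oo.
Proof. by move=> S0; split=> [u /S0|w _] //; exact: leNye. Qed.

Lemma is_lub_max S v : S v -> (forall u, S u -> u <= v) -> is_lub S v.
Proof. by move=> Sv v_ub; split=> // w; apply. Qed.

Lemma is_lub_pinfty S : (forall r : rat, exists2 t : rat, S t%:E & (r < t)%R) -> is_lub S +oo.
Proof.
move=> S_unbd; split=> [u _|[r| |] w_ub //]; first exact: leey.
  have [t St rt] := S_unbd r.
  by have := w_ub _ St; rewrite lee_fin leNgt rt.
by have [t /w_ub] := S_unbd 0%R.
Qed.

Lemma interval_lub (L : seq (rat * rat)) : exists v,
  is_lub (fun v => exists t, (forall c, List.In c L -> c.1 * t <= c.2)%R /\ v = t%:E) v.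
Proof.
set P := fun t : rat => forall c, List.In c L -> (c.1 * t <= c.2)%R.
have [[t0 Pt0]|noP] := classic (exists t, P t); last first.
  by exists -oo; apply: is_lub_empty => _ [t [Pt _]]; apply: noP; exists t.
have [[c1 [c1_in c1_pos]]|no_pos] := classic (exists c, List.In c L /\ (0 < c.1)%R).
  have c1_in' : List.In c1 (List.filter (fun c : rat * rat => 0 < c.1)%R L).
    exact/List.filter_In.
  have [p /List.filter_In [p_in p_pos] p_min] := ex_min (fun c : rat * rat => c.2 / c.1)%R c1_in'.
  have le_U t : P t -> (t <= p.2 / p.1)%R.
    by move=> Pt; rewrite ler_pdivlMr // mulrC; apply: Pt.
  exists (p.2 / p.1)%:E; apply: is_lub_max => [|_ [t [Pt ->]]]; last by rewrite lee_fin le_U.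
  exists (p.2 / p.1)%R; split=> // c c_in; case: (ltgtP c.1 0%R) => c0.
  - exact: le_trans (ler_wnM2l (ltW c0) (le_U _ Pt0)) (Pt0 c c_in).
  - rewrite mulrC -ler_pdivlMr //; apply: p_min; exact/List.filter_In.
  - by have := Pt0 c c_in; rewrite c0 !mul0r.
exists +oo; apply: is_lub_pinfty => r; exists (`|r| + `|t0| + 1)%R; last first.
  by have := ler_norm r; have := normr_ge0 t0; lra.
exists (`|r| + `|t0| + 1)%R; split=> // c c_in; apply: le_trans (Pt0 c c_in).
have c0 : (c.1 <= 0)%R by rewrite leNgt; apply/negP => c0; apply: no_pos; exists c.
by apply: (ler_wnM2l c0); have := ler_norm t0; have := normr_ge0 r; lra.
Qed.

End Lub.

Section LinearProgram.
Variables (m E l : nat) (A : 'M[rat]_(l, m)).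

(* [Psi rho i' b'] is the supremum of [lp_values (T p) (fun j => rho j s) i']. *)
Definition lp_values (S : linsys m E) (rb : 'I_l -> Qbar) (i : 'I_l) : Qbar -> Prop :=
  fun v => exists x x' y, lsat S x x' y /\
    (forall j, (Arow A j x)%:E <= rb j)%E /\ v = (Arow A i x')%:E.

Definition lp_var := ('I_m + 'I_m + 'I_E)%type.

Definition lp_point (x x' : 'cV[rat]_m) (y : 'cV[rat]_E) : lp_var -> rat :=
  fun o => match o with inl (inl a) => x a 0 | inl (inr a) => x' a 0 | inr e => y e 0 end.

Definition lp_form (a a' : 'I_m -> rat) (b : 'I_E -> rat) : lp_var -> rat :=
  fun o => match o with inl (inl k) => a k | inl (inr k) => a' k | inr e => b e end.

Lemma lp_form_point a a' b x x' y :
  (\sum_o lp_form a a' b o * lp_point x x' y o =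
   \sum_k a k * x k 0 + \sum_k a' k * x' k 0 + \sum_e b e * y e 0)%R.
Proof. by rewrite !big_sumType. Qed.

Lemma lp_pointK (z : lp_var -> rat) :
  lp_point (\col_a z (inl (inl a))) (\col_a z (inl (inr a))) (\col_e z (inr e)) =1 z.
Proof. by case=> [[a|a]|e]; rewrite /lp_point mxE. Qed.

Lemma Arow_lp_formx j x x' y :
  Arow A j x = (\sum_o lp_form (A j) (fun=> 0) (fun=> 0) o * lp_point x x' y o)%R.
Proof. by rewrite lp_form_point -!mulr_sumr !mul0r !addr0 /Arow mxE. Qed.

Lemma Arow_lp_formx' i x x' y :
  Arow A i x' = (\sum_o lp_form (fun=> 0) (A i) (fun=> 0) o * lp_point x x' y o)%R.
Proof. by rewrite lp_form_point -!mulr_sumr !mul0r add0r addr0 /Arow mxE. Qed.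

Definition lp_constrs (S : linsys m E) (rb : 'I_l -> Qbar) : seq (constr rat lp_var) :=
  List.map (fun k => (lp_form (Cx S k) (Cx' S k) (Cy S k), cc S k 0)) (enum 'I_(nc S)) ++
  List.flat_map (fun j => if rb j is r%:E then [:: (lp_form (A j) (fun=> 0) (fun=> 0), r)]
                          else [::]) (enum 'I_l).

Lemma sat_lp_constrs S rb x x' y : (forall j, rb j != -oo%E) ->
  sat_all (lp_constrs S rb) (lp_point x x' y) <->
  lsat S x x' y /\ forall j, ((Arow A j x)%:E <= rb j)%E.
Proof.
move=> rb_fin; split=> [Lz|[Sxy xb] c /List.in_app_iff [|]].
- split=> [k|j].
    have := Lz _ (List.in_or_app _ _ _ (or_introl (List.in_map _ _ _ (In_enum k)))).
    by rewrite /sat lp_form_point !mxE.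
  case rbj: (rb j) (rb_fin j) => [r| |] // _; last exact: leey.
  have c_in : List.In (lp_form (A j) (fun=> 0) (fun=> 0), r) (lp_constrs S rb).
    apply: List.in_or_app; right; apply/List.in_flat_map.
    by exists j; rewrite rbj; split; [exact: In_enum | left].
  by rewrite lee_fin (Arow_lp_formx j x x' y); exact: Lz _ c_in.
- by move=> /List.in_map_iff [k [<- _]]; have := Sxy k; rewrite /sat lp_form_point !mxE.
move=> /List.in_flat_map [j [_]]; case rbj: (rb j) => [r| |] //= [] // <-.
by have := xb j; rewrite rbj lee_fin (Arow_lp_formx j x x' y).
Qed.

Lemma lp_valuesE S rb i v : (forall j, rb j != -oo%E) ->
  lp_values S rb i v <-> exists z, sat_all (lp_constrs S rb) z /\
    v = (\sum_o lp_form (fun=> 0) (A i) (fun=> 0) o * z o)%:E.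
Proof.
move=> rb_fin; split=> [[x [x' [y [Sxy [xb ->]]]]]|[z [Lz ->]]].
  exists (lp_point x x' y); split; last by rewrite (Arow_lp_formx' i x x' y).
  exact/sat_lp_constrs.
move: Lz => /(eq_sat_all (fun o => esym (lp_pointK z o))) /sat_lp_constrs [] // Sxy xb.
exists (\col_a z (inl (inl a))), (\col_a z (inl (inr a))), (\col_e z (inr e)).
split=> //; split=> //.
rewrite (Arow_lp_formx' i (\col_a z (inl (inl a))) _ (\col_e z (inr e))).
by congr _%:E; apply: eq_bigr => o _; rewrite lp_pointK.
Qed.

Lemma lp_values_lub S rb i : exists v, is_lub (lp_values S rb i) v.
Proof.
have [[j rbj]|rb_fin] := classic (exists j, rb j = -oo%E).
  exists -oo%E; apply: is_lub_empty => v [x [x' [y [_ [xb _]]]]].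
  by have := xb j; rewrite rbj.
have {}rb_fin j : rb j != -oo%E by apply/eqP => rbj; apply: rb_fin; exists j.
have [L1 L1E] := linear_image_constr (fun o => lp_form (fun=> 0) (A i) (fun=> 0) o)
  (lp_constrs S rb).
have [v v_lub] := interval_lub L1.
exists v; apply: eq_is_lub v_lub => u; rewrite lp_valuesE //.
split=> [[t [/L1E [z [Lz <-]] ->]]|[z [Lz ->]]]; first by exists z.
by exists (\sum_o lp_form (fun=> 0) (A i) (fun=> 0) o * z o)%R; split => //; apply/L1E; exists z.
Qed.

End LinearProgram.

Lemma qsup_is_lub (S : Qbar -> Prop) : (exists v, is_lub S v) -> is_lub S (qsup S).
Proof. by move=> S_lub; apply: epsilon_spec. Qed.

Lemma le_qsup (S1 S2 : Qbar -> Prop) : (forall u, S1 u -> S2 u) ->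
  (exists v, is_lub S1 v) -> (exists v, is_lub S2 v) -> (qsup S1 <= qsup S2)%E.
Proof.
move=> S12 /qsup_is_lub [_ least1] /qsup_is_lub [ub2 _].
by apply: least1 => u /S12 /ub2.
Qed.

Section StrategyEvaluation.
Variables (m n d E l : nat) (A : 'M[rat]_(l, m)) (T : Bvec d -> linsys m E)
  (st : strategy l n d).

Lemma le_Psi rho1 rho2 : le_fun rho1 rho2 -> le_fun (Psi A T st rho1) (Psi A T st rho2).
Proof.
move=> le12 i b; rewrite /Psi; case: (st i b) => [[s p]|] //.
apply: le_qsup; [|exact: lp_values_lub..].
move=> u [x [x' [y [Sxy [xb ->]]]]]; exists x, x', y; split=> //; split=> // j.
exact: le_trans (xb j) (le12 j s).
Qed.

Lemma Psi_strategy rho i b1 b2 : st i b1 = st i b2 -> Psi A T st rho i b1 = Psi A T st rho i b2.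
Proof. by rewrite /Psi => ->. Qed.

Lemma crep_cls_of i b : st i (crep (cls_of st i b)) = st i b.
Proof.
rewrite /crep /=; case: pickP => [b' |/(_ b)]; first by rewrite inE => /eqP.
by rewrite inE eqxx.
Qed.

Lemma cls_of_surj i (C : cls st i) : exists b, C = cls_of st i b.
Proof.
case: C => C /[dup] /imsetP [b _ ->] C_cls; exists b.
by congr exist; exact: bool_irrelevance.
Qed.

Lemma eq_cls_fun (r1 r2 : forall i, cls st i -> Qbar) :
  (forall i b, r1 i (cls_of st i b) = r2 i (cls_of st i b)) -> r1 = r2.
Proof.
move=> r12; apply: functional_extensionality_dep => i.
by apply: functional_extensionality => C; have [b ->] := cls_of_surj C.
Qed.

Definition cls_lift (r : forall i, cls st i -> Qbar) : 'I_l -> Bvec n -> Qbar :=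
  fun i b => r i (cls_of st i b).

Definition cls_restrict (rho : 'I_l -> Bvec n -> Qbar) : forall i, cls st i -> Qbar :=
  fun i C => rho i (crep C).
Arguments cls_restrict rho i C : clear implicits.

Lemma Psihat_cls_of r i b : Psihat A T st r i (cls_of st i b) = Psi A T st (cls_lift r) i b.
Proof. by rewrite /Psihat crep_cls_of. Qed.

Lemma Psi_cls_lift r : Psihat A T st r = r -> Psi A T st (cls_lift r) = cls_lift r.
Proof.
move=> r_fix; do 2 apply: functional_extensionality => ?.
by rewrite -Psihat_cls_of r_fix.
Qed.

(* A fixed point of [Psi] is constant on every class, being computed from the strategy alone. *)
Lemma cls_restrict_cls_of rho i b :
  Psi A T st rho = rho -> cls_restrict rho i (cls_of st i b) = rho i b.
Proof. by move=> rho_fix; rewrite /cls_restrict -rho_fix; apply/Psi_strategy/crep_cls_of. Qed.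

Lemma cls_lift_restrict rho : Psi A T st rho = rho -> cls_lift (cls_restrict rho) = rho.
Proof.
by move=> rho_fix; do 2 apply: functional_extensionality => ?; apply: cls_restrict_cls_of.
Qed.

Lemma Psihat_cls_restrict rho :
  Psi A T st rho = rho -> Psihat A T st (cls_restrict rho) = cls_restrict rho.
Proof.
move=> rho_fix; apply: eq_cls_fun => i b.
by rewrite Psihat_cls_of cls_lift_restrict // rho_fix cls_restrict_cls_of.
Qed.

End StrategyEvaluation.

Theorem mainTheorem2 (m n d E l : nat) (A : 'M[rat]_(l, m))
  (T : Bvec d -> linsys m E) (st : strategy l n d)
  (rho_k rho_k1 : 'I_l -> Bvec n -> Qbar)
  (rhat1 rhohat : forall i : 'I_l, cls st i -> Qbar) :
  le_fun rho_k (Psi A T st rho_k) ->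
  least_fp_above (@le_fun l n) (Psi A T st) rho_k rho_k1 ->
  (forall i b, rhat1 i (cls_of st i b) = Psi A T st rho_k i b) ->
  least_fp_above (@le_dfun l (cls st)) (Psihat A T st) rhat1 rhohat ->
  forall i b, rho_k1 i b = rhohat i (cls_of st i b).
Proof.
move=> rho_k_le [fix1 [le1 least1]] rhat1E [fix2 [le2 least2]] i b.
have rho_k1_le : le_fun rho_k1 (cls_lift rhohat).
  apply: least1; first exact: Psi_cls_lift.
  by move=> j b'; apply: le_trans (rho_k_le j b') _; rewrite -rhat1E; exact: le2.
have rhohat_le : le_dfun rhohat (cls_restrict rho_k1).
  apply: least2; first exact: Psihat_cls_restrict.
  move=> j C; have [b' ->] := cls_of_surj C.
  by rewrite rhat1E (cls_restrict_cls_of _ _ fix1) -fix1; exact: le_Psi.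
apply/le_anti/andP; split; first exact: rho_k1_le.
by have := rhohat_le i (cls_of st i b); rewrite (cls_restrict_cls_of _ _ fix1).
Qed.
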